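(* Let $X$ be a positive random variable with $\mathbb{E}X = 1$ and $\mathbb{E}(X\log X) > \log 2$. Then there is a unique $\alpha\in(0,1)$ such that \[ \mathbb{E}\left(\frac{X^{\alpha}}{\mathbb{E} X^{\alpha}}\log \frac{X^{\alpha}}{\mathbb{E} X^{\alpha}}\right) = \log 2 . \] *)

From HB Require Import structures.
From mathcomp Require Import all_boot all_order all_algebra.
From mathcomp Require Import all_classical all_reals all_analysis.
Set Implicit Arguments. Unset Strict Implicit. Unset Printing Implicit Defensive.
Import Order.TTheory GRing.Theory Num.Theory.
Local Open Scope ring_scope.
Local Open Scope ereal_scope.

(* E[X^a] as a real number (finite for 0 < a < 1 when E X = 1, X > 0). *)
Definition moment {d} {T : measurableType d} {R : realType}
  (P : probability T R) (X : T -> R) (a : R) : R :=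
  fine (\int[P]_x ((X x) `^ a)%:E).

Definition tilted {d} {T : measurableType d} {R : realType}
  (P : probability T R) (X : T -> R) (a : R) : T -> R :=
  fun x => ((X x) `^ a / moment P X a)%R.

From HB Require Import structures.
From mathcomp Require Import all_boot all_order all_algebra.
From mathcomp Require Import all_classical all_reals all_analysis.
From mathcomp Require Import measurable_realfun ring lra.
Import Order.TTheory GRing.Theory Num.Theory.
Import numFieldNormedType.Exports.
Local Open Scope classical_set_scope.
Local Open Scope ring_scope.

(* Write q_a = X^a / E X^a and h(a) = E(q_a log q_a) = a E(X^a log X) / E X^a - log E X^a.
   By Gibbs' inequality the divergence E(q_b log (q_b / q_a)) is positive for a <> b unless X
   is a.e. constant, and X = 1 a.e. would give E(X log X) = 0; applied to both orders of a and b
   this makes h strictly increasing on (0, 1).  Dominated convergence makes h continuous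
   there.  As a -> 0, E X^a -> 1 while a E(X^a log X) <= 2 a, so h < log 2 near 0.  If h stayed
   below log 2, then a E(X^a log X) <= log 2 on (0, 1) and Fatou's lemma along a -> 1 would give
   E(X log X) <= log 2.  The intermediate value theorem yields the unique root of h = log 2. *)

Section exp_inequalities.
Context {R : realType}.
Implicit Types a l : R.

Lemma expR_mul_le_convex a l : 0 <= a <= 1 ->
  expR (a * l) <= a * expR l + (1 - a).
Proof.
case/andP=> a0 a1.
by have := convex_expR (Itv01 a0 a1) l 0; rewrite !convRE /= expR0 mulr0 addr0 mulr1.
Qed.

Lemma expR_mul_le1D a l : 0 <= a <= 1 -> expR (a * l) <= 1 + expR l.
Proof.
move=> a01; have /andP[a0 a1] := a01; have e0 := expR_ge0 l.
have : a * expR l <= expR l by rewrite ler_piMl.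
have := expR_mul_le_convex _ l a01; lra.
Qed.

Lemma expR_mul_mulr_le a l : 0 <= a < 1 -> expR (a * l) * l <= expR l / (1 - a).
Proof.
case/andP=> a0 a1; have sub1a_gt0 : 0 < 1 - a by rewrite subr_gt0.
have [l0|l0] := leP 0 l; last first.
  apply: le_trans (_ : 0 <= _); last by rewrite divr_ge0 ?expR_ge0 // ltW.
  by rewrite mulr_ge0_le0 ?expR_ge0 // ltW.
rewrite ler_pdivlMr //.
have -> : expR l = expR (a * l) * expR ((1 - a) * l) by rewrite -expRD; congr expR; ring.
rewrite -mulrA ler_wpM2l ?expR_ge0 // mulrC.
by have := expR_ge1Dx ((1 - a) * l); lra.
Qed.

Lemma expR_mul_mulr_ge a l : 0 < a -> - a^-1 <= expR (a * l) * l.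
Proof.
move=> a0; rewrite -(ler_pM2l a0) mulrN mulfV ?gt_eqF // mulrCA.
have e0 := expR_gt0 (a * l).
have := ler_wpM2l (ltW e0) (expR_ge1Dx (- (a * l))).
rewrite expRN mulfV ?lt0r_neq0 //; lra.
Qed.

Lemma norm_expR_mul_mulr_le a l : 0 < a < 1 ->
  `|expR (a * l) * l| <= a^-1 + expR l / (1 - a).
Proof.
case/andP=> a0 a1.
have le_r : expR (a * l) * l <= expR l / (1 - a) by apply: expR_mul_mulr_le; rewrite ltW.
have ge_l := expR_mul_mulr_ge _ l a0.
have : 0 <= a^-1 by rewrite invr_ge0 ltW.
have : 0 <= expR l / (1 - a) by rewrite divr_ge0 ?expR_ge0 // subr_ge0 ltW.
by rewrite ler_norml => *; apply/andP; split; lra.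
Qed.

End exp_inequalities.

Lemma exists_unique_ivt_incr (R : realType) (f : R -> R) (u v y : R) :
  {in `]u, v[, continuous f} -> {in `]u, v[ &, {homo f : a b / a < b}} ->
  (exists2 a, u < a < v & f a < y) -> (exists2 b, u < b < v & y < f b) ->
  exists! c, u < c < v /\ f c = y.
Proof.
move=> fC f_incr [a a_uv fa_y] [b b_uv y_fb].
have in_uv c : u < c < v -> c \in `]u, v[ by rewrite in_itv.
have f_mono := le_mono_in f_incr.
have ab : a <= b by rewrite -f_mono ?in_uv //; apply: ltW; exact: lt_trans y_fb.
have ab_uv c : c \in `[a, b] -> u < c < v.
  move: a_uv b_uv; rewrite in_itv /= => /andP[ua _] /andP[_ bv] /andP[ac cb].
  by rewrite (lt_le_trans ua ac) (le_lt_trans cb bv).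
have fC_ab : {within `[a, b], continuous f}.
  by apply: continuous_in_subspaceT => c /[!inE] /ab_uv /in_uv; exact: fC.
have [|c c_ab fc_y] := @IVT R f a b y ab fC_ab.
  by rewrite ge_min le_max (ltW fa_y) (ltW y_fb) orbT.
exists c; split; first by split => //; exact: ab_uv.
move=> c' [c'_uv fc'_y]; apply: (inc_inj_in f_mono); rewrite ?in_uv ?fc_y //.
exact: ab_uv.
Qed.

Section integral_lemmas.
Context {d} {T : measurableType d} {R : realType}.
Context {mu : {measure set T -> \bar R}} {D : set T}.
Hypothesis mD : measurable D.

Lemma integrable_addr (f g : T -> R) : mu.-integrable D (EFin \o f) ->
  mu.-integrable D (EFin \o g) -> mu.-integrable D (EFin \o (fun x => f x + g x)).
Proof. by move=> if_ ig; apply: eq_integrable mD _ _ _ (integrableD mD if_ ig) => x _. Qed.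

Lemma integrable_mull (k : R) (f : T -> R) : mu.-integrable D (EFin \o f) ->
  mu.-integrable D (EFin \o (fun x => k * f x)).
Proof. by move=> if_; apply: eq_integrable mD _ _ _ (integrableZl mD k if_) => x _. Qed.

Lemma ae_eq0_Rintegral_eq0 (f : T -> R) : mu.-integrable D (EFin \o f) ->
  (forall x, D x -> 0 <= f x) -> \int[mu]_(x in D) f x = 0 ->
  {ae mu, forall x, D x -> f x = 0}.
Proof.
move=> if_ f0 intf0.
have : (\int[mu]_(x in D) `|(f x)%:E| = 0)%E.
  rewrite -[RHS]/(0%:E) -intf0 fineK ?integrable_fin_num //.
  by apply: eq_integral => x /[!inE] Dx; rewrite gee0_abs // lee_fin f0.
move/(ae_eq_integral_abs mu mD (measurable_int _ if_)).
by apply: filterS => x + Dx => /(_ Dx) [].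
Qed.

End integral_lemmas.

Section probability_lemmas.
Context {d} {T : measurableType d} {R : realType} {P : probability T R}.

Lemma ae_prob_ex {Q : T -> Prop} : {ae P, forall x, Q x} -> exists x, Q x.
Proof.
case=> N [mN PN0 NQ]; apply: contrapT => noQ.
have : (P setT <= P N)%E.
  by apply: le_measure; rewrite ?inE // => x _; apply: NQ => Qx; apply: noQ; exists x.
by rewrite probability_setT PN0 lee_fin ler10.
Qed.

Lemma Rintegral_prob_cst (k : R) : \int[P]_x k = k.
Proof.
rewrite Rintegral_cst // -[RHS]mulr1; congr (_ * _).
by rewrite -[RHS]/(fine 1%E) -(probability_setT P).
Qed.

Lemma integral_prob_cst (k : R) : (\int[P]_x k%:E = k%:E)%E.
Proof.
have P1 : ((P : {measure set T -> \bar R}) setT = 1)%E by exact: probability_setT.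
by rewrite integral_cst // P1 mule1.
Qed.

Lemma integral_prob_addr_cst (f : T -> R) (k : R) : P.-integrable setT (EFin \o f) ->
  (\int[P]_x (f x + k)%:E = (\int[P]_x f x + k)%:E)%E.
Proof.
move=> if_; have ik := @finite_measure_integrable_cst _ _ _ P setT k measurableT.
rewrite -[LHS]fineK; last exact/integrable_fin_num/integrable_addr.
by congr EFin; rewrite -/(Rintegral P setT _) RintegralD // Rintegral_prob_cst.
Qed.

Lemma integral_le_of_shift_le (f : T -> R) (s B : R) : 0 <= s ->
  measurable_fun setT f -> (forall x, - s <= f x) ->
  (\int[P]_x (f x + 2 * s)%:E <= (B + 2 * s)%:E)%E -> (\int[P]_x (f x)%:E <= B%:E)%E.
Proof.
move=> s0 mf f_ge le_shift.
have [if_|not_if] := boolP (P.-integrable setT (EFin \o f)).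
  (* otherwise [|f| <= f + 2 s] makes the left-hand side of [le_shift] infinite *)
  rewrite -[X in (X <= _)%E]fineK ?integrable_fin_num // lee_fin.
  by move: le_shift; rewrite integral_prob_addr_cst // lee_fin lerD2r.
have abs_oo : (\int[P]_x `|(f x)%:E| = +oo)%E.
  apply/eqP; rewrite -leye_eq leNgt; apply/negP => abs_fin.
  by move/negP: not_if; apply; apply/integrableP; split => //; exact/measurable_EFinP.
have : (\int[P]_x `|(f x)%:E| <= \int[P]_x (f x + 2 * s)%:E)%E.
  apply: ge0_le_integral => //.
  - by apply: measurableT_comp => //; exact/measurable_EFinP.
  - by apply/measurable_EFinP; apply: measurable_funD.
  - move=> x _; have := f_ge x; rewrite lee_fin ler_norml => ?.
    by apply/andP; split; lra.
by move/le_trans/(_ le_shift); rewrite abs_oo leye_eq.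
Qed.

Lemma fatou_bounded_below (f_ : nat -> T -> R) (f : T -> R) (s B : R) : 0 <= s ->
  measurable_fun setT f -> (forall n, measurable_fun setT (f_ n)) ->
  (forall n x, - s <= f_ n x) -> (forall x, f_ ^~ x @ \oo --> f x) ->
  (forall n, P.-integrable setT (EFin \o f_ n)) -> (forall n, \int[P]_x f_ n x <= B) ->
  (\int[P]_x (f x)%:E <= B%:E)%E.
Proof.
move=> s0 mf mf_ f_ge f_f_ if_ f_B.
apply: (integral_le_of_shift_le _ _ _ s0 mf).
  move=> x; rewrite -(cvg_lim _ (f_f_ x)) //.
  by apply: limr_ge; [exact: cvgP (f_f_ x)|exact: nearW].
pose g n x : \bar R := (f_ n x + 2 * s)%:E.
have g0 n x : setT x -> (0 <= g n x)%E.
  by move=> _; rewrite /g lee_fin; have := f_ge n x; lra.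
have mg n : measurable_fun setT (g n) by apply/measurable_EFinP; apply: measurable_funD.
have lim_g x : limn_einf (g^~ x) = (f x + 2 * s)%:E.
  apply: (cvg_limn_einf_sup _).1; apply: cvg_EFin; first exact: nearW.
  by apply: cvgD => //; exact: cvg_cst.
under eq_integral do rewrite -lim_g.
apply: le_trans (fatou P measurableT mg g0) _.
rewrite limn_einf_lim; apply: lime_le; first exact: is_cvg_einfs.
apply: nearW => n; apply: le_trans (_ : \int[P]_x g n x <= _)%E.
  by apply: ereal_inf_lbound; exists n => /=.
by rewrite integral_prob_addr_cst // lee_fin lerD2r.
Qed.

End probability_lemmas.

Section tilting.
Context {d} {T : measurableType d} {R : realType} (P : probability T R) (X : T -> R).
Hypothesis mX : measurable_fun setT X.
Hypothesis Xpos : forall x, 0 < X x.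
Hypothesis EX1 : (\int[P]_x (X x)%:E = 1)%E.

Definition Xpow (a : R) x := expR (a * ln (X x)).
Definition mom a := \int[P]_x Xpow a x.
Definition mom_ln a := \int[P]_x (Xpow a x * ln (X x)).
Definition tilted_entropy a := a * (mom_ln a / mom a) - ln (mom a).

Lemma expR_lnX x : expR (ln (X x)) = X x.
Proof. by rewrite lnK // posrE. Qed.

Lemma XpowE a x : X x `^ a = Xpow a x.
Proof. by rewrite /powR gt_eqF. Qed.

Lemma momentE a : moment P X a = mom a.
Proof. by rewrite /moment /mom /Rintegral; congr fine; apply: eq_integral => x _; rewrite XpowE. Qed.

Lemma measurable_lnX : measurable_fun setT (fun x => ln (X x)).
Proof. exact: measurableT_comp (@measurable_ln R) mX. Qed.

Lemma measurable_Xpow a : measurable_fun setT (Xpow a).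
Proof. by apply: measurableT_comp => //; apply: measurable_funM => //; exact: measurable_lnX. Qed.

Lemma integrable_X : P.-integrable setT (EFin \o X).
Proof.
apply/integrableP; split; first exact/measurable_EFinP.
under eq_integral do rewrite /= ger0_norm ?(ltW (Xpos _)) //.
by rewrite EX1 ltry.
Qed.

Lemma integrable_affineX (k c : R) : P.-integrable setT (EFin \o (fun x => k + c * X x)).
Proof.
apply: integrable_addr => //; first exact: finite_measure_integrable_cst.
exact: integrable_mull integrable_X.
Qed.

Lemma Rintegral_affineX (k c : R) : \int[P]_x (k + c * X x) = k + c.
Proof.
rewrite RintegralD //; first last.
- exact: integrable_mull integrable_X.
- exact: finite_measure_integrable_cst.
by rewrite Rintegral_prob_cst RintegralZl ?integrable_X // /Rintegral EX1 mulr1.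
Qed.

Lemma Xpow_le1D a x : 0 <= a <= 1 -> Xpow a x <= 1 + X x.
Proof. by move=> a01; rewrite /Xpow -{2}expR_lnX; exact: expR_mul_le1D. Qed.

Lemma integrable_Xpow a : 0 <= a <= 1 -> P.-integrable setT (EFin \o Xpow a).
Proof.
move=> a01; apply: le_integrable (integrable_affineX 1 1) => //.
  exact/measurable_EFinP/measurable_Xpow.
move=> x _; rewrite /= lee_fin mul1r !ger0_norm ?expR_ge0 ?Xpow_le1D //.
by rewrite addr_ge0 // ltW.
Qed.

Lemma integrable_Xpow_ln a : 0 < a < 1 ->
  P.-integrable setT (EFin \o (fun x => Xpow a x * ln (X x))).
Proof.
move=> /[dup] a01 /andP[a0 a1].
apply: le_integrable (integrable_affineX a^-1 (1 - a)^-1) => //.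
  apply/measurable_EFinP/measurable_funM; [exact: measurable_Xpow|exact: measurable_lnX].
move=> x _; rewrite /= lee_fin [leRHS]ger0_norm; last first.
  by rewrite addr_ge0 ?mulr_ge0 ?invr_ge0 ?subr_ge0 ?ltW.
by rewrite /Xpow -{3}expR_lnX [_^-1 * _]mulrC; exact: norm_expR_mul_mulr_le.
Qed.

Lemma integrable_Xpow_comb a (al be : R) : 0 < a < 1 ->
  P.-integrable setT (EFin \o (fun x => al * Xpow a x + be * (Xpow a x * ln (X x)))).
Proof.
move=> /[dup] a01 /andP[a0 a1].
apply: integrable_addr => //; apply: integrable_mull => //.
  by apply: integrable_Xpow; rewrite !ltW.
exact: integrable_Xpow_ln.
Qed.

Lemma Rintegral_Xpow_comb a (al be : R) : 0 < a < 1 ->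
  \int[P]_x (al * Xpow a x + be * (Xpow a x * ln (X x))) = al * mom a + be * mom_ln a.
Proof.
move=> /[dup] a01 /andP[a0 a1].
have iXa : P.-integrable setT (EFin \o Xpow a) by apply: integrable_Xpow; rewrite !ltW.
have iXla := @integrable_Xpow_ln a a01.
by rewrite RintegralD ?RintegralZl //; apply: integrable_mull.
Qed.

Lemma mom_le1 a : 0 <= a <= 1 -> mom a <= 1.
Proof.
move=> a01; rewrite -[leRHS](subrK a) -(Rintegral_affineX (1 - a) a).
apply: le_Rintegral => //; first exact: integrable_Xpow.
  exact: integrable_affineX.
by move=> x _; rewrite /Xpow -{2}expR_lnX addrC; exact: expR_mul_le_convex.
Qed.

Lemma mom_gt0 a : 0 <= a <= 1 -> 0 < mom a.
Proof.
move=> a01; rewrite lt_neqAle Rintegral_ge0 ?andbT; last by move=> x _; exact: expR_ge0.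
apply/eqP => /esym mom0.
have [x /(_ I) /eqP] := ae_prob_ex (ae_eq0_Rintegral_eq0 measurableT _
  (integrable_Xpow _ a01) (fun x _ => expR_ge0 _) mom0).
by rewrite gt_eqF // expR_gt0.
Qed.

Lemma tilted_entropyE a : 0 < a < 1 ->
  (\int[P]_x (tilted P X a x * ln (tilted P X a x))%:E = (tilted_entropy a)%:E)%E.
Proof.
move=> a01; have /andP[a0 a1] := a01; have M0 : 0 < mom a by rewrite mom_gt0 ?ltW.
have tiltedE x : tilted P X a x * ln (tilted P X a x)
    = - ln (mom a) / mom a * Xpow a x + a / mom a * (Xpow a x * ln (X x)).
  rewrite /tilted momentE XpowE ln_div ?posrE ?expR_gt0 // /Xpow expRK.
  by field; rewrite gt_eqF.
under eq_integral do rewrite tiltedE.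
rewrite -[LHS]fineK; last exact/integrable_fin_num/integrable_Xpow_comb.
rewrite -/(Rintegral P setT _) Rintegral_Xpow_comb //; congr EFin.
by rewrite /tilted_entropy; field; rewrite gt_eqF.
Qed.

Lemma continuous_Xpow x : continuous (Xpow ^~ x).
Proof.
have -> : Xpow ^~ x = expR \o (fun a => a * ln (X x)) by [].
move=> a; apply: continuous_comp; first by apply: cvgMl; exact: cvg_id.
exact: continuous_expR.
Qed.

Lemma mom_continuous : {in `]0, 1[, continuous mom}.
Proof.
have int_Xpow a : `]0, 1[%classic a -> P.-integrable setT (EFin \o Xpow a).
  by rewrite /= in_itv /= => /andP[a0 a1]; apply: integrable_Xpow; rewrite !ltW.
have Xpow_le a : `]0, 1[%classic a -> {ae P, forall x, setT x -> `|Xpow a x| <= 1 + 1 * X x}.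
  rewrite /= in_itv /= => /andP[a0 a1]; apply: aeW => x _.
  by rewrite ger0_norm ?expR_ge0 // mul1r Xpow_le1D // !ltW.
have cont : {ae P, forall x, setT x -> {in `]0, 1[%classic, continuous (Xpow ^~ x)}}.
  by apply: aeW => x _ a _; exact: continuous_Xpow.
move=> a a01.
apply: (continuity_under_integral measurableT int_Xpow cont (integrable_affineX 1 1) Xpow_le).
by rewrite inE /=.
Qed.

Lemma norm_Xpow_ln_le a u v x : 0 < u <= a -> a <= v < 1 ->
  `|Xpow a x * ln (X x)| <= u^-1 + (1 - v)^-1 * X x.
Proof.
case/andP=> u0 ua /andP[av v1]; have a0 := lt_le_trans u0 ua; have a1 := le_lt_trans av v1.
apply: le_trans (norm_expR_mul_mulr_le _ _ _) _; first by rewrite a0 a1.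
rewrite expR_lnX [_ / _]mulrC lerD ?ler_pM2r ?Xpos // lef_pV2 ?posrE ?subr_gt0 //.
by rewrite lerD2l lerN2.
Qed.

Lemma mom_ln_continuous : {in `]0, 1[, continuous mom_ln}.
Proof.
move=> a; rewrite in_itv /= => /andP[a0 a1].
pose u := a / 2; pose v := (1 + a) / 2.
have [u0 ua] : 0 < u /\ u < a by rewrite /u; split; lra.
have [av v1] : a < v /\ v < 1 by rewrite /v; split; lra.
have int_Xpow_ln b : `]u, v[%classic b ->
    P.-integrable setT (EFin \o (fun x => Xpow b x * ln (X x))).
  rewrite /= in_itv /= => /andP[ub bv]; apply: integrable_Xpow_ln.
  by rewrite (lt_trans u0 ub) (lt_trans bv v1).
have dom b : `]u, v[%classic b -> {ae P, forall x, setT x ->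
    `|Xpow b x * ln (X x)| <= u^-1 + (1 - v)^-1 * X x}.
  rewrite /= in_itv /= => /andP[ub bv]; apply: aeW => x _.
  by apply: norm_Xpow_ln_le; rewrite ?u0 ?v1 ltW.
have cont : {ae P, forall x, setT x ->
    {in `]u, v[%classic, continuous (fun b => Xpow b x * ln (X x))}}.
  by apply: aeW => x _ b _; apply: cvgMl; exact: continuous_Xpow.
apply: (continuity_under_integral measurableT int_Xpow_ln cont (integrable_affineX _ _) dom).
by rewrite inE /= in_itv /= ua av.
Qed.

Lemma tilted_entropy_continuous : {in `]0, 1[, continuous tilted_entropy}.
Proof.
move=> a /[dup] a01; rewrite in_itv /= => /andP[a0 a1].
have M0 : 0 < mom a by rewrite mom_gt0 ?ltW.
have Mc := mom_continuous _ a01.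
apply: cvgB; last exact: continuous_comp Mc (continuous_ln M0).
apply: cvgM; first exact: cvg_id.
exact: cvgM (mom_ln_continuous _ a01) (cvgV (lt0r_neq0 M0) Mc).
Qed.

Lemma cvg_mom_right0 : mom a @[a --> 0^'+] --> (1 : R).
Proof.
(* continuity under the integral needs an open interval around 0 *)
pose G (a : R) := mom `|a|.
have int_G a : `]-1, 1[%classic a -> P.-integrable setT (EFin \o Xpow `|a|).
  rewrite /= in_itv /= => /andP[a0 a1]; apply: integrable_Xpow.
  by rewrite normr_ge0 ler_norml !ltW.
have cont : {ae P, forall x, setT x ->
    {in `]-1, 1[%classic, continuous (fun a : R => Xpow `|a| x)}}.
  apply: aeW => x _ a _.
  exact: continuous_comp (@norm_continuous _ R^o a) (continuous_Xpow x _).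
have G_le a : `]-1, 1[%classic a -> {ae P, forall x, setT x -> `|Xpow `|a| x| <= 1 + 1 * X x}.
  rewrite /= in_itv /= => /andP[a0 a1]; apply: aeW => x _.
  by rewrite ger0_norm ?expR_ge0 // mul1r Xpow_le1D // normr_ge0 ler_norml !ltW.
have G_cont : {for 0, continuous G}.
  apply: (continuity_under_integral measurableT int_G cont (integrable_affineX 1 1) G_le).
  by rewrite inE /= in_itv /= ltrN10 ltr01.
have G0 : G 0 = 1.
  rewrite /G /mom normr0 -[RHS](@Rintegral_prob_cst _ _ _ P).
  by apply: eq_Rintegral => x _; rewrite /Xpow mul0r expR0.
apply: cvg_trans (_ : G a @[a --> 0^'+] --> (1 : R)); last first.
  by rewrite -G0; exact: cvg_at_right_filter G_cont.
apply: near_eq_cvg; near=> a; rewrite /G ger0_norm //.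
Unshelve. all: by end_near.
Qed.

Lemma mom_ln_le2 a : 0 < a <= 2^-1 -> mom_ln a <= 2.
Proof.
move=> /andP[a0 a2]; have a1 : a < 1 by apply: le_lt_trans a2 _; rewrite invf_lt1 // ltr1n.
rewrite -[leRHS]add0r -(Rintegral_affineX 0 2).
apply: le_Rintegral => //; first by apply: integrable_Xpow_ln; rewrite a0 a1.
  exact: integrable_affineX.
move=> x _; rewrite add0r /Xpow -{3}expR_lnX.
apply: le_trans (expR_mul_mulr_le _ _ _) _; first by rewrite (ltW a0) a1.
rewrite mulrC ler_pM2r ?expR_gt0 // -div1r ler_pdivrMr ?subr_gt0 //.
by move: a2; rewrite -(ler_pM2r (ltr0n R 2)) mulVf //; lra.
Qed.

Lemma tilted_entropy_small : exists2 a, 0 < a < 1 & tilted_entropy a < ln 2.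
Proof.
have ln2_gt0 : 0 < ln (2 : R) by rewrite ln_gt0 // ltr1n.
have bound_cvg : 2 * a / mom a - ln (mom a) @[a --> 0^'+] --> 2 * 0 / 1 - ln (1 : R).
  apply: cvgB; last first.
    by apply: (cvg_comp _ _ cvg_mom_right0); exact: continuous_ln.
  apply: cvgM; last exact: cvgV (oner_neq0 R) cvg_mom_right0.
  by apply: cvgMr; exact: cvg_at_right_filter cvg_id.
rewrite mulr0 mul0r ln1 subr0 in bound_cvg.
have [a [a0 a2 bound_a]] : exists a : R,
    [/\ 0 < a, a <= 2^-1 & 2 * a / mom a - ln (mom a) < ln 2].
  apply: (@filter_ex _ (0^'+)); near=> a; split.
  - by near: a; exact: nbhs_right_gt.
  - by near: a; apply: nbhs_right_ltW; rewrite invr_gt0.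
  - by near: a; exact: cvgr_lt bound_cvg _ ln2_gt0.
have a1 : a < 1 by apply: le_lt_trans a2 _; rewrite invf_lt1 // ltr1n.
have M0 : 0 < mom a by rewrite mom_gt0 ?ltW.
exists a; first by rewrite a0 a1.
apply: le_lt_trans bound_a; rewrite /tilted_entropy lerD2r mulrA ler_pM2r ?invr_gt0 //.
by rewrite [leLHS]mulrC ler_pM2r // mom_ln_le2 // a0.
Unshelve. all: by end_near.
Qed.

Hypothesis XlnX_gt_ln2 : ((ln 2)%:E < \int[P]_x (X x * ln (X x))%:E)%E.

Lemma X_not_ae_cst (k : R) : ~ {ae P, forall x, X x = k}.
Proof.
move=> Xk.
have : (\int[P]_x (X x)%:E = \int[P]_x (k%:E))%E.
  by apply: ae_eq_integral => //; [exact/measurable_EFinP|apply: filterS Xk => x /= ->].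
rewrite EX1 integral_prob_cst => -[k1].
have : (\int[P]_x (X x * ln (X x))%:E = \int[P]_x 0%:E)%E.
  apply: ae_eq_integral => //.
    by apply/measurable_EFinP/measurable_funM => //; exact: measurable_lnX.
  by apply: filterS Xk => x /= ->; rewrite -k1 ln1 mulr0.
move: XlnX_gt_ln2 => /[swap] ->.
by rewrite integral_prob_cst lte_fin ltNge ln_ge0 // ler1n.
Qed.

Lemma ln_mom_tangent_lt a b : 0 < a < 1 -> 0 < b < 1 -> a != b ->
  ln (mom b) - ln (mom a) < (b - a) * (mom_ln b / mom b).
Proof.
move=> a01 b01 ab; have /andP[a0 a1] := a01; have /andP[b0 b1] := b01.
have Ma0 : 0 < mom a by rewrite mom_gt0 ?ltW.
have Mb0 : 0 < mom b by rewrite mom_gt0 ?ltW.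
pose c := ln (mom b) - ln (mom a).
pose t x := (b - a) * ln (X x) - c.
(* since q_b e^(-t) = q_a ([tilt] below), [\int g] is the divergence KL(q_b || q_a) *)
pose g x := Xpow b x / mom b * (t x - 1 + expR (- t x)).
have tilt x : Xpow b x / mom b * expR (- t x) = Xpow a x / mom a.
  have -> : - t x = ln (mom b) + (- ln (mom a) + (a - b) * ln (X x)) by rewrite /t /c; ring.
  have -> : Xpow a x = Xpow b x * expR ((a - b) * ln (X x)).
    by rewrite /Xpow -expRD; congr expR; ring.
  by rewrite !expRD expRN !lnK ?posrE //; field; rewrite !gt_eqF.
have gE x : g x = ((- c - 1) / mom b * Xpow b x + (b - a) / mom b * (Xpow b x * ln (X x)))
                  + ((mom a)^-1 * Xpow a x + 0 * (Xpow a x * ln (X x))).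
  have tilt_x := tilt x; rewrite /g /t in tilt_x *.
  by rewrite mulrDr tilt_x; field; rewrite !gt_eqF.
have g_ge0 x : 0 <= g x.
  rewrite mulr_ge0 ?divr_ge0 ?expR_ge0 ?(ltW Mb0) //.
  by have := expR_ge1Dx (- t x); lra.
have int_g : \int[P]_x g x = (b - a) * (mom_ln b / mom b) - c.
  under eq_Rintegral do rewrite gE.
  rewrite RintegralD ?Rintegral_Xpow_comb ?integrable_Xpow_comb //.
  by rewrite /c; field; rewrite !gt_eqF.
rewrite -subr_gt0 -int_g lt_neqAle Rintegral_ge0 ?andbT //.
apply/eqP => /esym int_g0.
have ig : P.-integrable setT (EFin \o g).
  apply: eq_integrable measurableT _ _ _ (integrable_addr measurableT _ _
    (integrable_Xpow_comb _ _ _ b01) (integrable_Xpow_comb _ _ _ a01)).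
  by move=> x _ /=; rewrite gE.
apply: (X_not_ae_cst (expR (c / (b - a)))).
apply: filterS (ae_eq0_Rintegral_eq0 measurableT _ ig (fun x _ => g_ge0 x) int_g0).
move=> x /(_ I) /eqP; rewrite !mulf_eq0 invr_eq0 (gt_eqF (expR_gt0 _)) (gt_eqF Mb0) /= => tx0.
have t0 : t x = 0.
  have [//|tx] := eqVneq (t x) 0; have := @expR_gt1Dx R (- t x).
  by rewrite oppr_eq0 tx => /(_ isT); move/eqP: tx0; lra.
rewrite -expR_lnX; congr expR; move/eqP: t0; rewrite subr_eq0 => /eqP <-.
by field; rewrite subr_eq0 eq_sym.
Qed.

Lemma tilted_entropy_incr : {in `]0, 1[ &, {homo tilted_entropy : a b / a < b}}.
Proof.
move=> a b; rewrite !in_itv /= => a01 b01 ab; have /andP[a0 _] := a01.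
have ba0 : 0 < b - a by rewrite subr_gt0.
rewrite /tilted_entropy; set sa := mom_ln a / mom a; set sb := mom_ln b / mom b.
have Mab : ln (mom b) - ln (mom a) < (b - a) * sb by exact: ln_mom_tangent_lt (negbT (lt_eqF ab)).
have Mba : ln (mom a) - ln (mom b) < (a - b) * sa by exact: ln_mom_tangent_lt (negbT (gt_eqF ab)).
have : sa < sb by rewrite -(ltr_pM2l ba0); lra.
rewrite -(ltr_pM2l a0); lra.
Qed.

Lemma tilted_entropy_large : exists2 a, 0 < a < 1 & ln 2 < tilted_entropy a.
Proof.
apply: contrapT => no_a.
have scaled_le_ln2 a : 0 < a < 1 -> a * mom_ln a <= ln 2.
  move=> a01; have /andP[a0 a1] := a01.
  have M0 : 0 < mom a by rewrite mom_gt0 ?ltW.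
  have ent_le : tilted_entropy a <= ln 2.
    by rewrite leNgt; apply/negP => ent_gt; apply: no_a; exists a.
  have MlnM : mom a * ln (mom a) <= 0 by rewrite mulr_ge0_le0 ?ln_le0 ?mom_le1 ?ltW.
  have ln2M : ln 2 * mom a <= ln 2 by rewrite ler_piMr ?ln_ge0 ?ler1n ?mom_le1 ?ltW.
  move: ent_le; rewrite /tilted_entropy mulrA -(ler_pM2r M0) mulrBl divfK ?gt_eqF //.
  lra.
pose a_ n : R := 1 - harmonic n / 2.
have a_01 n : 0 < a_ n < 1.
  have : 0 < harmonic n :> R by exact: harmonic_gt0.
  have : harmonic n <= 1 :> R by rewrite /= invf_le1 // ler1n.
  by rewrite /a_; move=> *; apply/andP; split; lra.
have a_1 : a_ n @[n --> \oo] --> (1 : R).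
  rewrite -[Y in _ --> Y]subr0 -(mul0r 2^-1).
  exact: cvgB (cvg_cst _) (cvgMl cvg_harmonic).
have f_cvg x : (fun n => a_ n * (Xpow (a_ n) x * ln (X x))) @ \oo --> X x * ln (X x).
  have Xpow_cvg : Xpow (a_ n) x @[n --> \oo] --> expR (1 * ln (X x)).
    by apply: (cvg_comp _ _ (cvgMl (b := ln (X x)) a_1)); exact: continuous_expR.
  by have := cvgM a_1 (cvgMl (b := ln (X x)) Xpow_cvg); rewrite !mul1r expR_lnX; apply.
have : (\int[P]_x (X x * ln (X x))%:E <= (ln 2)%:E)%E.
  apply: (fatou_bounded_below _ _ _ _ ler01 _ _ _ f_cvg).
  - by apply: measurable_funM => //; exact: measurable_lnX.
  - move=> n; apply: measurable_funM => //.
    by apply: measurable_funM; [exact: measurable_Xpow|exact: measurable_lnX].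
  - move=> n x; have /andP[a0 _] := a_01 n.
    by rewrite -(mulfV (lt0r_neq0 a0)) -mulrN ler_pM2l // expR_mul_mulr_ge.
  - by move=> n; apply: integrable_mull => //; exact: integrable_Xpow_ln.
  - by move=> n; rewrite RintegralZl ?scaled_le_ln2 ?integrable_Xpow_ln.
by rewrite leNgt XlnX_gt_ln2.
Qed.

End tilting.

Local Open Scope ereal_scope.

Theorem mainTheorem1 (d : measure_display) (T : measurableType d) (R : realType)
  (P : probability T R) (X : T -> R)
  (mX : measurable_fun setT X)
  (Xpos : forall t, (0 < X t)%R)
  (EX1 : \int[P]_x (X x)%:E = 1)
  (Hent : (ln 2)%:E < \int[P]_x (X x * ln (X x))%:E) :
  exists! a : R, ((0 < a < 1)%R /\
    \int[P]_x (tilted P X a x * ln (tilted P X a x))%:E = (ln 2)%:E).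
Proof.
have [a [[a01 ent_a] a_uniq]] : exists! a, (0 < a < 1 /\ tilted_entropy P X a = ln 2)%R.
  apply: exists_unique_ivt_incr.
  - exact: tilted_entropy_continuous.
  - exact: tilted_entropy_incr.
  - exact: tilted_entropy_small.
  - exact: tilted_entropy_large.
exists a; split; first by rewrite tilted_entropyE // ent_a.
by move=> b [b01]; rewrite tilted_entropyE // => -[ent_b]; exact: a_uniq.
Qed.
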